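(* Let $\epsilon\in[0,1]$, let $\theta$ be any softmax parameter, and let $\hat\xi=(\hat\xi_1,\dots,\hat\xi_n)$ be the $\epsilon$-exploration policy of $\xi^\theta$, i.e. $\hat\xi_i(a_i\mid s_i)=(1-\epsilon)\xi_i^{\theta_i}(a_i\mid s_i)+\epsilon/|\mathcal A_i|$ for all $i,s_i,a_i$. Then for every agent $i$, $$\max_{s\in\mathcal S,\,a_i\in\mathcal A_i}\left|\overline Q_i^{\hat\xi}(s,a_i)-\overline Q_i^{\xi^\theta}(s,a_i)\right|\le\frac{6n\epsilon}{(1-\gamma)^2}.$$
   Context: Networked Markov game. There are $n$ agents $\mathcal N=\{1,\dots,n\}$ placed at the nodes of an undirected graph $\mathcal G=(\mathcal N,\mathcal E)$ with graph distance $\mathrm{dist}$. For an integer $\kappa\ge0$, $N_i^\kappa=\{j\in\mathcal N:\mathrm{dist}(i,j)\le\kappa\}$ (so $i\in N_i^\kappa$), $\mathcal N_i=N_i^1$, $-N_i^\kappa=\mathcal N\setminus N_i^\kappa$, and $n(\kappa)=\max_i|N_i^\kappa|$. Agent $i$ has a finite local state space $\mathcal S_i$ and a finite local action space $\mathcal A_i$; $\mathcal S=\prod_i\mathcal S_i$, $\mathcal A=\prod_i\mathcal A_i$, and for $I\subseteq\mathcal N$ we write $s_I,a_I,\mathcal S_I,\mathcal A_I$ for the joint states/actions/spaces of the agents in $I$ (the subscript $-i$ means $\mathcal N\setminus\{i\}$). The dynamics are $\mathcal P(s'\mid s,a)=\prod_i\mathcal P_i(s_i'\mid s_{\mathcal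 N_i},a_i)$, the initial distribution is $\mu\in\Delta(\mathcal S)$, and $\gamma\in(0,1)$ is a discount factor. Each agent has a reward $r_i:\mathcal S\times\mathcal A\to[0,1]$ depending only on $(s_{N_i^{\kappa_r}},a_{N_i^{\kappa_r}})$ for a fixed integer $\kappa_r\ge0$. A joint policy $\xi=(\xi_1,\dots,\xi_n)$ acts by $\xi(a\mid s)=\prod_i\xi_i(a_i\mid s_i)$. For a joint policy $\xi$: $Q_i^\xi(s,a)=\sum_{t\ge0}\gamma^t\mathbb E_\xi[r_i(s(t),a(t))\mid s(0)=s,a(0)=a]$; $\overline Q_i^\xi(s,a_i)=\mathbb E_{a_{-i}\sim\xi_{-i}(\cdot\mid s_{-i})}Q_i^\xi(s,a_i,a_{-i})$. Softmax policies: for $\theta_i\in\mathbb R^{|\mathcal S_i||\mathcal A_i|}$, $\xi_i^{\theta_i}(a_i\mid s_i)=\exp(\theta_{i,s_i,a_i})/\sum_{a_i'\in\mathcal A_i}\exp(\theta_{i,s_i,a_i'})$; $\xi^\theta=(\xi_1^{\theta_1},\dots,\xi_n^{\theta_n})$. *)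

From HB Require Import structures.
From mathcomp Require Import all_boot all_order all_algebra.
From mathcomp Require Import all_classical all_reals all_analysis.
Set Implicit Arguments. Unset Strict Implicit. Unset Printing Implicit Defensive.
Import Order.TTheory GRing.Theory Num.Theory.
Local Open Scope ring_scope.

Section NetGame.
Variables (R : realType) (n : nat).
Variables (S A : 'I_n -> finType).

Definition jstate := {dffun forall i : 'I_n, S i}.
Definition jaction := {dffun forall i : 'I_n, A i}.

Fixpoint dist_le (e : rel 'I_n) (k : nat) (i j : 'I_n) : bool :=
  match k with
  | 0 => i == j
  | k'.+1 => dist_le e k' i j || [exists l, e i l && dist_le e k' l j]
  end.

(* local transition kernels P i s a_i s_i' = P_i(s_i' | s_{N_i}, a_i) *)
Definition local_kernel := forall i : 'I_n, jstate -> A i -> S i -> R.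
Definition local_policy := forall i : 'I_n, S i -> A i -> R.

Definition jtrans (P : local_kernel) (s : jstate) (a : jaction) (s' : jstate) : R :=
  \prod_(i < n) P i s (a i) (s' i).

Definition jpol (xi : local_policy) (s : jstate) (a : jaction) : R :=
  \prod_(i < n) xi i (s i) (a i).

Fixpoint exp_reward (P : local_kernel) (xi : local_policy)
    (r : jstate -> jaction -> R) (t : nat) (s : jstate) (a : jaction) : R :=
  match t with
  | 0 => r s a
  | t'.+1 => \sum_(s' : jstate) jtrans P s a s' *
              \sum_(a' : jaction) jpol xi s' a' * exp_reward P xi r t' s' a'
  end.

Definition Qfun (P : local_kernel) (gamma : R) (xi : local_policy)
    (r : jstate -> jaction -> R) (s : jstate) (a : jaction) : R :=
  limn (fun N : nat => \sum_(0 <= t < N) gamma ^+ t * exp_reward P xi r t s a).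

Definition Qbar (P : local_kernel) (gamma : R) (xi : local_policy)
    (r : jstate -> jaction -> R) (i : 'I_n) (s : jstate) (ai : A i) : R :=
  \sum_(a : jaction | a i == ai)
     (\prod_(j < n | j != i) xi j (s j) (a j)) * Qfun P gamma xi r s a.

Definition softmax (theta : forall i : 'I_n, S i -> A i -> R) : local_policy :=
  fun i si ai => expR (theta i si ai) / \sum_(b : A i) expR (theta i si b).

Definition explore (eps : R) (xi : local_policy) : local_policy :=
  fun i si ai => (1 - eps) * xi i si ai + eps / #|A i|%:R.

End NetGame.

(* Both [Qbar] values average [Q_i] over the actions of the other agents, with weights
   the product of the local policies in which agent [i]'s factor is pinned to [a_i].
   Their difference splits into (difference of the weights) * Q plus the weights times
   (difference of the Q-functions). Exploration moves every local policy by at most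
   [2 eps] in L1, hence a product over the [n] agents by at most [2 n eps]; since
   [0 <= Q <= 1/(1-gamma)], the first part is at most [2 n eps / (1-gamma)]. The
   expected rewards at time [t] under the two policies differ by at most [2 n eps t],
   and [sum_t t gamma^t <= 1/(1-gamma)^2] bounds the second part by
   [2 n eps / (1-gamma)^2]. *)

From HB Require Import structures.
From mathcomp Require Import all_boot all_order all_algebra.
From mathcomp Require Import all_classical all_reals all_analysis.
From mathcomp Require Import ring lra.
Import Order.TTheory GRing.Theory Num.Theory.
Local Open Scope ring_scope.
Set Implicit Arguments. Unset Strict Implicit. Unset Printing Implicit Defensive.

Lemma sum_dffun_prod (R : comNzRingType) (I : finType) (T_ : I -> finType)
  (F : forall i, T_ i -> R) :
  \sum_(a : {dffun forall i, T_ i}) \prod_i F i (a i) = \prod_i \sum_(b : T_ i) F i b.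
Proof.
transitivity (\prod_i \sum_(j in tagged_with T_ i) untag 0 (F i) j); last first.
  by apply: eq_bigr => i _; rewrite (big_tag F i).
rewrite bigA_distr_big_dep.
have := @big_fprod R 0 1 *%R +%R _ T_ (fun i => [ffun b => F i b]).
have -> : \sum_(f in family (tagged_with T_)) \prod_i untag 0 (F i) (f i) =
   \sum_(f in family (tagged_with T_)) \prod_i untag 0 ([ffun b => F i b]) (f i).
  apply: eq_bigr => f _; apply: eq_bigr => i _; congr untag.
  by apply: funext => b; rewrite ffunE.
move=> <-.
rewrite (reindex (@dffun_of_fprod _ T_)); last exact/onW_bij/dffun_of_fprod_bij.
by apply: eq_bigr => t _; apply: eq_bigr => i _; rewrite !ffunE.
Qed.

Lemma prod_le_factor (R : realDomainType) (I : finType) (x : I -> R) (k : I) :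
  (forall i, 0 <= x i) -> (forall i, i != k -> x i <= 1) -> \prod_i x i <= x k.
Proof.
move=> x_ge0 x_le1; rewrite (bigD1 k) //= ler_piMr //.
by apply: prodr_ile1 => i ik; rewrite x_ge0 x_le1.
Qed.

Section Subdistributions.
Variable R : realType.

Definition subdistr (T : finType) (p : T -> R) :=
  (forall x, 0 <= p x) /\ \sum_x p x <= 1.

Definition l1dist (T : finType) (p q : T -> R) := \sum_x `|p x - q x|.

Lemma l1distxx (T : finType) (p : T -> R) : l1dist p p = 0.
Proof. by rewrite /l1dist big1 // => x _; rewrite subrr normr0. Qed.

Definition prod_distr (I : finType) (T_ : I -> finType) (p : forall i, T_ i -> R)
  (a : {dffun forall i, T_ i}) : R := \prod_i p i (a i).

Lemma subdistr_prod_distr (I : finType) (T_ : I -> finType)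
  (p : forall i, T_ i -> R) :
  (forall i, subdistr (p i)) -> subdistr (prod_distr p).
Proof.
move=> p_sub; split=> [a|]; first by apply: prodr_ge0 => i _; case: (p_sub i).
rewrite /prod_distr sum_dffun_prod; apply: prodr_ile1 => i _.
by case: (p_sub i) => p_ge0 p_le1; rewrite p_le1 sumr_ge0.
Qed.

Lemma l1dist_prod_distr1 (I : finType) (T_ : I -> finType)
  (p q : forall i, T_ i -> R) (k : I) :
  (forall i, i != k -> p i = q i) -> (forall i, i != k -> subdistr (p i)) ->
  l1dist (prod_distr p) (prod_distr q) <= l1dist (p k) (q k).
Proof.
move=> pq p_sub.
pose g i (b : T_ i) : R := if i == k then `|p i b - q i b| else p i b.
have g_ge0 i b : 0 <= g i b by rewrite /g; case: eqP => // /eqP ik; case: (p_sub i ik).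
have -> : l1dist (prod_distr p) (prod_distr q) =
    \sum_(a : {dffun forall i, T_ i}) \prod_i g i (a i).
  apply: eq_bigr => a _; rewrite /prod_distr (bigD1 k) //= [X in _ - X](bigD1 k) //=.
  rewrite [X in _ * X - _](eq_bigr (fun i => q i (a i))); last by move=> i /pq ->.
  have q_ge0 : 0 <= \prod_(i | i != k) q i (a i).
    by apply: prodr_ge0 => i ik; rewrite -(pq i ik); case: (p_sub i ik).
  rewrite -mulrBl normrM (ger0_norm q_ge0) [RHS](bigD1 k) //= /g eqxx.
  by congr (_ * _); apply: eq_bigr => i ik; rewrite (negbTE ik) pq.
rewrite sum_dffun_prod.
apply: le_trans (prod_le_factor (x := fun i => \sum_b g i b) (k := k) _ _) _.
- by move=> i; apply: sumr_ge0.
- by move=> i ik; rewrite /g (negbTE ik); case: (p_sub i ik).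
- by rewrite /g eqxx.
Qed.

(* Hybrid argument: switch the factors from [q] to [p] one coordinate at a time. *)
Lemma l1dist_prod_distr (n : nat) (T_ : 'I_n -> finType)
  (p q : forall i, T_ i -> R) (d : R) :
  (forall i, subdistr (p i)) -> (forall i, subdistr (q i)) ->
  (forall i, l1dist (p i) (q i) <= d) ->
  l1dist (prod_distr p) (prod_distr q) <= n%:R * d.
Proof.
move=> p_sub q_sub pq_d.
pose c (k : nat) (i : 'I_n) : T_ i -> R := if (i < k)%N then p i else q i.
pose h k := prod_distr (c k).
have step (k : 'I_n) : l1dist (h k.+1) (h k) <= d.
  apply: le_trans (l1dist_prod_distr1 (k := k) _ _) _.
  - move=> i ik; rewrite /c ltnS leq_eqVlt.
    by case: eqP => [/val_inj ik'|//]; rewrite ik' eqxx in ik.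
  - by move=> i _; rewrite /c; case: ifP.
  - by rewrite /c ltnSn ltnn.
have telescope a : prod_distr p a - prod_distr q a = \sum_(k < n) (h k.+1 a - h k a).
  rewrite -(big_mkord xpredT (fun k => h k.+1 a - h k a)) telescope_sumr //.
  by congr (_ - _); apply: eq_bigr => i _; rewrite /c ?ltn_ord ?ltn0.
apply: le_trans (_ : \sum_a \sum_(k < n) `|h k.+1 a - h k a| <= _).
  by apply: ler_sum => a _; rewrite telescope ler_norm_sum.
rewrite exchange_big; apply: le_trans (_ : \sum_(k < n) d <= _).
  by apply: ler_sum => k _; apply: step.
by rewrite sumr_const card_ord mulr_natl.
Qed.

Lemma expect_bounded (T : finType) (p f : T -> R) (c : R) :
  subdistr p -> 0 <= c -> (forall x, 0 <= f x <= c) ->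
  0 <= \sum_x p x * f x <= c.
Proof.
case=> p_ge0 p_le1 c_ge0 f_bnd; apply/andP; split.
  by apply: sumr_ge0 => x _; apply: mulr_ge0 => //; case/andP: (f_bnd x).
apply: le_trans (_ : \sum_x p x * c <= _).
  by apply: ler_sum => x _; apply: ler_wpM2l => //; case/andP: (f_bnd x).
by rewrite -mulr_suml ler_piMl.
Qed.

Lemma expect_dist (T : finType) (p q f g : T -> R) (c e : R) :
  subdistr q -> 0 <= e -> (forall x, `|f x| <= c) -> (forall x, `|f x - g x| <= e) ->
  `|\sum_x p x * f x - \sum_x q x * g x| <= l1dist p q * c + e.
Proof.
case=> q_ge0 q_le1 e_ge0 f_le fg_le.
rewrite -sumrB (eq_bigr (fun x => (p x - q x) * f x + q x * (f x - g x))); last first.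
  by move=> x _; ring.
apply: le_trans (ler_norm_sum _ _ _) _.
apply: le_trans (ler_sum _ (fun x _ => ler_normD _ _)) _.
rewrite big_split /= /l1dist mulr_suml; apply: lerD.
  by apply: ler_sum => x _; rewrite normrM ler_wpM2l.
apply: le_trans (_ : \sum_x q x * e <= _).
  by apply: ler_sum => x _; rewrite normrM ger0_norm // ler_wpM2l.
by rewrite -mulr_suml ler_piMl.
Qed.

Lemma subdistr_normalize (T : finType) (w : T -> R) :
  (forall x, 0 <= w x) -> subdistr (fun x => w x / \sum_y w y).
Proof.
move=> w_ge0; split=> [x|]; first by rewrite divr_ge0 ?sumr_ge0.
rewrite -mulr_suml; have [->|W_neq0] := eqVneq (\sum_y w y) 0; first by rewrite mul0r.
by rewrite mulfV.
Qed.

Lemma sum_inv_card (T : finType) : \sum_(x : T) (#|T|%:R : R)^-1 <= 1.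
Proof.
rewrite sumr_const (_ : #|xpredT| = #|T|) // -[_ *+ _]mulr_natr.
by have [->|T_neq0] := eqVneq #|T| 0%N; rewrite ?mulr0 // mulVf // pnatr_eq0.
Qed.

Section UniformMixture.
Variables (T : finType) (eps : R) (p : T -> R).
Hypotheses (eps_ge0 : 0 <= eps) (eps_le1 : eps <= 1).

Let mix x := (1 - eps) * p x + eps / #|T|%:R.

Lemma subdistr_mix_uniform : subdistr p -> subdistr mix.
Proof.
case=> p_ge0 p_le1; split=> [x|].
  by rewrite addr_ge0 ?divr_ge0 ?mulr_ge0 ?subr_ge0.
rewrite big_split /= -!mulr_sumr.
have : (1 - eps) * \sum_x p x <= 1 - eps by rewrite ler_piMr ?subr_ge0.
have : eps * \sum_(x : T) #|T|%:R^-1 <= eps by rewrite ler_piMr ?sum_inv_card.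
lra.
Qed.

Lemma l1dist_mix_uniform : subdistr p -> l1dist mix p <= 2 * eps.
Proof.
case=> p_ge0 p_le1.
have -> : l1dist mix p = eps * \sum_x `|#|T|%:R^-1 - p x|.
  rewrite mulr_sumr; apply: eq_bigr => x _.
  have -> : mix x - p x = eps * (#|T|%:R^-1 - p x) by rewrite /mix; ring.
  by rewrite normrM ger0_norm.
rewrite mulrC ler_wpM2r //.
apply: le_trans (_ : \sum_x (#|T|%:R^-1 + p x) <= _).
  apply: ler_sum => x _; apply: le_trans (ler_normB _ _) _.
  by rewrite !ger0_norm ?invr_ge0 ?ler0n.
by rewrite big_split /=; have := sum_inv_card T; lra.
Qed.

End UniformMixture.

End Subdistributions.

Section DiscountedSums.
Variables (R : realType) (g : R).
Hypotheses (g_ge0 : 0 <= g) (g_lt1 : g < 1).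

Definition discounted (u : nat -> R) (N : nat) := \sum_(0 <= t < N) g ^+ t * u t.

Lemma sum_expr_le N : \sum_(0 <= t < N) g ^+ t <= (1 - g)^-1.
Proof.
have closed_form : (1 - g) * \sum_(0 <= t < N) g ^+ t = 1 - g ^+ N.
  elim: N => [|N IH]; first by rewrite big_geq // mulr0 expr0 subrr.
  by rewrite big_nat_recr //= mulrDr IH exprS; ring.
have g1_gt0 : 0 < 1 - g by rewrite subr_gt0.
rewrite -(ler_pM2l g1_gt0) closed_form mulfV ?gt_eqF //.
by rewrite lerBlDr lerDl exprn_ge0.
Qed.

Lemma sum_natr_expr_le N : \sum_(0 <= t < N) t%:R * g ^+ t <= (1 - g)^-2.
Proof.
have closed_form : (1 - g) ^+ 2 * \sum_(0 <= t < N) t%:R * g ^+ t =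
    g - g ^+ N * (N%:R * (1 - g) + g).
  elim: N => [|N IH]; first by rewrite big_geq // mulr0 expr0; ring.
  by rewrite big_nat_recr //= mulrDr IH -natr1 !exprS; ring.
have g12_gt0 : 0 < (1 - g) ^+ 2 by rewrite exprn_gt0 // subr_gt0.
rewrite -(ler_pM2l g12_gt0) closed_form mulfV ?gt_eqF // lerBlDr.
rewrite (le_trans (ltW g_lt1)) // lerDl.
by rewrite mulr_ge0 ?exprn_ge0 // addr_ge0 // mulr_ge0 ?ler0n // subr_ge0 ltW.
Qed.

Lemma discounted_bounded (u : nat -> R) : (forall t, 0 <= u t <= 1) ->
  cvgn (discounted u) /\ 0 <= limn (discounted u) <= (1 - g)^-1.
Proof.
move=> u_bnd.
have term_ge0 t : 0 <= g ^+ t * u t by rewrite mulr_ge0 ?exprn_ge0 //; case/andP: (u_bnd t).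
have ub N : discounted u N <= (1 - g)^-1.
  apply: le_trans (sum_expr_le N); apply: ler_sum => t _.
  by rewrite ler_piMr ?exprn_ge0 //; case/andP: (u_bnd t).
have u_cvg : cvgn (discounted u).
  apply: nondecreasing_is_cvgn; last by exists (1 - g)^-1 => _ [N _ <-].
  by apply/nondecreasing_seqP => N; rewrite /discounted big_nat_recr //= lerDl.
split=> //; apply/andP; split.
  by apply: limr_ge => //; apply: nearW => N; apply: sumr_ge0.
by apply: limr_le => //; apply: nearW.
Qed.

Lemma discounted_dist (u v : nat -> R) (k : R) :
  cvgn (discounted u) -> cvgn (discounted v) ->
  (forall t, `|u t - v t| <= t%:R * k) ->
  `|limn (discounted u) - limn (discounted v)| <= k / (1 - g) ^+ 2.
Proof.
move=> u_cvg v_cvg uv_le.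
have k_ge0 : 0 <= k by have := uv_le 1%N; rewrite mul1r; apply: le_trans.
have partial_le N : `|discounted u N - discounted v N| <= k / (1 - g) ^+ 2.
  rewrite /discounted -sumrB; apply: le_trans (ler_norm_sum _ _ _) _.
  apply: le_trans (_ : \sum_(0 <= t < N) t%:R * g ^+ t * k <= _).
    apply: ler_sum => t _; rewrite -mulrBr normrM ger0_norm ?exprn_ge0 //.
    by rewrite (mulrC t%:R) -mulrA; apply: ler_wpM2l; rewrite ?exprn_ge0.
  by rewrite -mulr_suml mulrC; apply: ler_wpM2l; rewrite ?sum_natr_expr_le.
have w_cvg : cvgn (discounted u - discounted v) by exact: is_cvgB.
have w_bnd N : - (k / (1 - g) ^+ 2) <= (discounted u - discounted v) N <= k / (1 - g) ^+ 2.
  by rewrite -ler_norml; apply: partial_le.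
rewrite -limB // ler_norml; apply/andP; split.
  by apply: limr_ge => //; apply: nearW => N; case/andP: (w_bnd N).
by apply: limr_le => //; apply: nearW => N; case/andP: (w_bnd N).
Qed.

End DiscountedSums.

Unset Implicit Arguments.

Section ExpectedRewards.
Context {R : realType} {n : nat} {S A : 'I_n -> finType} {P : local_kernel R S A}.
Hypothesis P_sub : forall i s ai, subdistr (P i s ai).
Context {r : jstate S -> jaction A -> R}.
Hypothesis r_bnd : forall s a, 0 <= r s a <= 1.

Lemma subdistr_jtrans s a : subdistr (jtrans P s a).
Proof. exact: (subdistr_prod_distr (p := fun i => P i s (a i))). Qed.

Lemma subdistr_jpol (xi : local_policy R S A) s :
  (forall i si, subdistr (xi i si)) -> subdistr (jpol xi s).
Proof. by move=> xi_sub; apply: (subdistr_prod_distr (p := fun i => xi i (s i))). Qed.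

Lemma exp_reward_bounded (xi : local_policy R S A) :
  (forall i si, subdistr (xi i si)) ->
  forall t s a, 0 <= exp_reward P xi r t s a <= 1.
Proof.
move=> xi_sub; elim=> [|t IH] s a //=.
apply: (expect_bounded (subdistr_jtrans s a)) => // s'.
exact: (expect_bounded (subdistr_jpol xi s' xi_sub)).
Qed.

(* The policies enter once per time step, so the error grows linearly in [t]. *)
Lemma exp_reward_dist (xi zeta : local_policy R S A) {d : R} :
  (forall i si, subdistr (xi i si)) -> (forall i si, subdistr (zeta i si)) ->
  0 <= d -> (forall i si, l1dist (xi i si) (zeta i si) <= d) ->
  forall t s a,
  `|exp_reward P xi r t s a - exp_reward P zeta r t s a| <= t%:R * (n%:R * d).
Proof.
move=> xi_sub zeta_sub d_ge0 xz_d; elim=> [|t IH] s a /=.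
  by rewrite subrr normr0 mul0r.
have nd_ge0 : 0 <= n%:R * d by rewrite mulr_ge0.
have E_bnd s' a' : `|exp_reward P xi r t s' a'| <= 1.
  by have /andP[E_ge0 E_le1] := exp_reward_bounded xi xi_sub t s' a'; rewrite ger0_norm.
have V_bnd s' : `|\sum_a' jpol xi s' a' * exp_reward P xi r t s' a'| <= 1.
  have /andP[V_ge0 V_le1] := expect_bounded (subdistr_jpol xi s' xi_sub) ler01
    (exp_reward_bounded xi xi_sub t s').
  by rewrite ger0_norm.
have V_dist s' :
    `|\sum_a' jpol xi s' a' * exp_reward P xi r t s' a' -
      \sum_a' jpol zeta s' a' * exp_reward P zeta r t s' a'|
    <= t.+1%:R * (n%:R * d).
  apply: le_trans (expect_dist (jpol xi s') (subdistr_jpol zeta s' zeta_sub) _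
    (E_bnd s') (IH s')) _.
    by rewrite mulr_ge0 ?ler0n.
  rewrite mulr1 -natr1 mulrDl mul1r addrC lerD2l.
  exact: (l1dist_prod_distr (p := fun i => xi i (s' i)) (q := fun i => zeta i (s' i))).
have := expect_dist (jtrans P s a) (subdistr_jtrans s a) _ V_bnd V_dist.
by rewrite l1distxx mul0r add0r; apply; rewrite mulr_ge0 ?ler0n.
Qed.

Context {gamma : R}.
Hypotheses (gamma_ge0 : 0 <= gamma) (gamma_lt1 : gamma < 1).

Lemma Qfun_bounded (xi : local_policy R S A) :
  (forall i si, subdistr (xi i si)) ->
  forall s a, 0 <= Qfun P gamma xi r s a <= (1 - gamma)^-1.
Proof.
by move=> xi_sub s a; case: (discounted_bounded gamma_ge0 gamma_lt1
  (fun t => exp_reward_bounded xi xi_sub t s a)).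
Qed.

Lemma Qfun_dist (xi zeta : local_policy R S A) {d : R} :
  (forall i si, subdistr (xi i si)) -> (forall i si, subdistr (zeta i si)) ->
  0 <= d -> (forall i si, l1dist (xi i si) (zeta i si) <= d) ->
  forall s a,
  `|Qfun P gamma xi r s a - Qfun P gamma zeta r s a| <= n%:R * d / (1 - gamma) ^+ 2.
Proof.
move=> xi_sub zeta_sub d_ge0 xz_d s a.
have [xi_cvg _] := discounted_bounded gamma_ge0 gamma_lt1
  (fun t => exp_reward_bounded xi xi_sub t s a).
have [zeta_cvg _] := discounted_bounded gamma_ge0 gamma_lt1
  (fun t => exp_reward_bounded zeta zeta_sub t s a).
exact: discounted_dist xi_cvg zeta_cvg
  (fun t => exp_reward_dist xi zeta xi_sub zeta_sub d_ge0 xz_d t s a).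
Qed.

End ExpectedRewards.

Section PinnedAction.
Context {R : realType} {n : nat} {S A : 'I_n -> finType}.
Context {xi : local_policy R S A} {i : 'I_n}.
Variables (ai : A i) (s : jstate S).

(* The local policies at [s] with agent [i]'s factor replaced by the point mass
   at [ai]; actions of different agents are compared as tagged values. *)
Definition pin_action : forall j : 'I_n, A j -> R :=
  fun j b => if j == i then (Tagged A b == Tagged A ai)%:R else xi j (s j) b.

Lemma Qbar_pin_action (P : local_kernel R S A) (gamma : R)
    (r : jstate S -> jaction A -> R) :
  Qbar P gamma xi r s ai =
  \sum_(a : jaction A) prod_distr pin_action a * Qfun P gamma xi r s a.
Proof.
rewrite /Qbar big_mkcond; apply: eq_bigr => a _.
rewrite /prod_distr [in RHS](bigD1 i) //= /pin_action /= eqxx eq_Tagged.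
case: (a i == ai); last by rewrite !mul0r.
by rewrite mul1r; congr (_ * _); apply: eq_bigr => j /negbTE ->.
Qed.

Lemma subdistr_pin_action :
  (forall j sj, subdistr (xi j sj)) -> forall j, subdistr (pin_action j).
Proof.
move=> xi_sub j; rewrite /pin_action; have [->|_] := eqVneq j i; last exact: xi_sub.
split=> [b|]; first by rewrite ler0n.
by rewrite (bigD1 ai) //= eqxx big1 ?addr0 // => b /negbTE; rewrite eq_Tagged => ->.
Qed.

End PinnedAction.

Arguments pin_action {R n S A} xi {i} ai s.

Lemma l1dist_pin_action {R : realType} {n : nat} {S A : 'I_n -> finType}
    (xi zeta : local_policy R S A) {i : 'I_n} (ai : A i) (s : jstate S) {d : R} :
  0 <= d -> (forall j sj, l1dist (xi j sj) (zeta j sj) <= d) ->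
  forall j, l1dist (pin_action xi ai s j) (pin_action zeta ai s j) <= d.
Proof.
move=> d_ge0 xz_d j; rewrite /pin_action; have [->|_] := eqVneq j i; last exact: xz_d.
by rewrite l1distxx.
Qed.


Theorem mainTheorem15 (R : realType) (n : nat) (S A : 'I_n -> finType)
  (e : rel 'I_n) (e_sym : symmetric e)
  (P : local_kernel R S A)
  (P_ge0 : forall i s ai si', 0 <= P i s ai si')
  (P_sum1 : forall i s ai, \sum_(si' : S i) P i s ai si' = 1)
  (P_local : forall i (s s' : jstate S) ai si',
      (forall j, dist_le e 1 i j -> s j = s' j) -> P i s ai si' = P i s' ai si')
  (kappa_r : nat) (r : 'I_n -> jstate S -> jaction A -> R)
  (r_bnd : forall i s a, 0 <= r i s a <= 1)
  (r_local : forall i (s s' : jstate S) (a a' : jaction A),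
      (forall j, dist_le e kappa_r i j -> s j = s' j /\ a j = a' j) ->
      r i s a = r i s' a')
  (gamma : R) (hgamma : 0 < gamma < 1)
  (eps : R) (heps : 0 <= eps <= 1)
  (theta : forall i : 'I_n, S i -> A i -> R) :
  forall (i : 'I_n) (s : jstate S) (ai : A i),
    `| Qbar P gamma (explore eps (softmax theta)) (r i) s ai
       - Qbar P gamma (softmax theta) (r i) s ai |
    <= 6 * n%:R * eps / (1 - gamma) ^+ 2.
Proof.
move=> i s ai; case/andP: hgamma => /ltW gamma_ge0 gamma_lt1.
case/andP: heps => eps_ge0 eps_le1; have two_eps_ge0 : 0 <= 2 * eps by rewrite mulr_ge0.
set xi := softmax theta; set xih := explore eps xi.
have P_sub j s' aj : subdistr (P j s' aj) by split; rewrite ?P_sum1.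
have xi_sub j sj : subdistr (xi j sj) by apply: subdistr_normalize => b; exact: expR_ge0.
have xih_sub j sj : subdistr (xih j sj) by exact: subdistr_mix_uniform.
have xih_xi j sj : l1dist (xih j sj) (xi j sj) <= 2 * eps by exact: l1dist_mix_uniform.
have Qh_bnd a : `|Qfun P gamma xih (r i) s a| <= (1 - gamma)^-1.
  have /andP[Qh_ge0 Qh_le] := Qfun_bounded P_sub (r_bnd i) gamma_ge0 gamma_lt1 xih xih_sub s a.
  by rewrite ger0_norm.
have W_dist := l1dist_prod_distr (subdistr_pin_action ai s xih_sub)
  (subdistr_pin_action ai s xi_sub) (l1dist_pin_action xih xi ai s two_eps_ge0 xih_xi).
have Q_dist := Qfun_dist P_sub (r_bnd i) gamma_ge0 gamma_lt1 xih xi xih_sub xi_sub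
  two_eps_ge0 xih_xi s.
rewrite !Qbar_pin_action.
apply: le_trans (expect_dist _ (subdistr_prod_distr (subdistr_pin_action ai s xi_sub)) _
  Qh_bnd Q_dist) _; first by rewrite !mulr_ge0 ?invr_ge0 ?exprn_ge0 ?ler0n // subr_ge0 ltW.
have c_ge1 : 1 <= (1 - gamma)^-1 by rewrite invf_ge1 ?subr_gt0 // lerBlDr lerDl.
rewrite -!exprVn; set c := (1 - gamma)^-1; have c_ge0 := le_trans ler01 c_ge1.
have neps_ge0 : 0 <= n%:R * eps by rewrite mulr_ge0.
have : l1dist (prod_distr (pin_action xih ai s)) (prod_distr (pin_action xi ai s)) * c
    <= n%:R * (2 * eps) * c by rewrite ler_wpM2r.
have : 0 <= n%:R * eps * c * (c - 1) by rewrite !mulr_ge0 ?subr_ge0.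
nra.
Qed.
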